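(* Let $\mathcal{P}_1,\mathcal{P}_2$ be finite posets with $p_j=|\mathcal{P}_j|$, such that $\mathcal{C}(\mathcal{P}_j)\subset\mathbb{R}^{p_j}$ has $q_j$ extremal rays for $j=1,2$, and suppose $\mathcal{C}(\mathcal{P}_2)$ is simplicial. Then $r$ is a typical ND rank in $\mathcal{C}(\mathcal{P}_1)\otimes\mathcal{C}(\mathcal{P}_2)$ if and only if $\min(p_1,p_2)\le r\le\min(q_1,q_2)$.
   Context: For a finite poset $\mathcal{Q}$, the order cone $\mathcal{C}(\mathcal{Q})$ is the set of $\mathbf{f}\in\mathbb{R}^{\mathcal{Q}}$ with $f_x\ge0$ and $f_x\le f_y$ whenever $x\preceq y$; a cone in $\mathbb{R}^p$ is simplicial if it is the conical hull of $p$ linearly independent vectors. $\mathcal{N}_{\le r}$ is the set of matrices $\sum_{i=1}^r\mathbf{a}_i\mathbf{b}_i^\intercal$ with $\mathbf{a}_i\in\mathcal{C}(\mathcal{P}_1)$, $\mathbf{b}_i\in\mathcal{C}(\mathcal{P}_2)$, and $\mathcal{N}_r=\mathcal{N}_{\le r}\setminus\mathcal{N}_{\le r-1}$. A number $r$ is a typical ND rank if $\mathcal{N}_r$ has non-empty interior in $\mathbb{R}^{p_1\times p_2}$. *)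

From HB Require Import structures.
From mathcomp Require Import all_boot all_order all_algebra.
From mathcomp Require Import reals.
Set Implicit Arguments. Unset Strict Implicit. Unset Printing Implicit Defensive.
Import Order.TTheory GRing.Theory Num.Theory.
Local Open Scope ring_scope.

Section Defs.
Variable R : realType.

Definition order_cone (d : Order.disp_t) (Q : finPOrderType d) (f : Q -> R) : Prop :=
  (forall x, 0 <= f x) /\ (forall x y : Q, (x <= y)%O -> f x <= f y).

Definition extremal_vec (T : Type) (C : (T -> R) -> Prop) (v : T -> R) : Prop :=
  [/\ C v, exists x, v x != 0 &
      forall u w, C u -> C w -> (forall x, v x = u x + w x) ->
        exists2 t, 0 <= t & forall x, u x = t * v x].

Definition same_ray (T : Type) (u v : T -> R) : Prop :=
  exists2 t, 0 < t & forall x, u x = t * v x.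

Definition num_extremal_rays (T : Type) (C : (T -> R) -> Prop) (q : nat) : Prop :=
  exists v : 'I_q -> T -> R,
    [/\ forall i, extremal_vec C (v i),
        forall i j, same_ray (v i) (v j) -> i = j &
        forall u, extremal_vec C u -> exists i, same_ray u (v i)].

Definition simplicial (T : finType) (C : (T -> R) -> Prop) : Prop :=
  exists v : 'I_#|T| -> T -> R,
    (forall c : 'I_#|T| -> R, (forall x, \sum_i c i * v i x = 0) -> forall i, c i = 0) /\
    (forall f, C f <-> exists2 c : 'I_#|T| -> R, (forall i, 0 <= c i) &
                         forall x, f x = \sum_i c i * v i x).

Definition ND_le (d1 d2 : Order.disp_t) (P1 : finPOrderType d1) (P2 : finPOrderType d2)
    (r : nat) (M : P1 -> P2 -> R) : Prop :=
  exists a : 'I_r -> P1 -> R, exists b : 'I_r -> P2 -> R,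
    [/\ forall i, order_cone (a i), forall i, order_cone (b i) &
        forall x y, M x y = \sum_i a i x * b i y].

Definition ND_eq (d1 d2 : Order.disp_t) (P1 : finPOrderType d1) (P2 : finPOrderType d2)
    (r : nat) (M : P1 -> P2 -> R) : Prop :=
  match r with
  | 0 => @ND_le _ _ P1 P2 0 M
  | s.+1 => @ND_le _ _ P1 P2 s.+1 M /\ ~ @ND_le _ _ P1 P2 s M
  end.

(* A set of matrices in R^{P1 x P2} has non-empty interior (Euclidean topology,
   expressed with entrywise balls). *)
Definition nonempty_interior (T1 T2 : Type) (S : (T1 -> T2 -> R) -> Prop) : Prop :=
  exists M0 : T1 -> T2 -> R, exists2 e : R, 0 < e &
    forall M, (forall x y, `|M x y - M0 x y| < e) -> S M.

Definition typical_ND_rank (d1 d2 : Order.disp_t) (P1 : finPOrderType d1)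
    (P2 : finPOrderType d2) (r : nat) : Prop :=
  @nonempty_interior _ _ (@ND_eq _ _ P1 P2 r).

End Defs.

(* Lower bound: a decomposition with r terms has matrix rank at most r, while
   some arbitrarily small perturbation of any matrix has rank min(p1, p2).
   Upper bound: every element of an order cone is a nonnegative combination of
   its q extremal rays, so a decomposition with r > q_j terms can be rewritten
   with q_j terms, and N_r is empty.
   Conversely, pick r distinct extremal rays of C(P1), which are indicators of
   upsets U_j (including every principal upset when p1 <= r), and a basis u_j
   of the simplicial cone C(P2).  Matrices whose u-coordinates are close to
   ind U_j (or to 0 beyond r), shifted by a small multiple of an interior point,
   still lie in N_{<=r}.  If one of them were in N_{<=r-1}, its r coordinates
   would be nonnegative combinations of r-1 vectors of C(P1); for each j some
   generator is then close to the ray of ind U_j, as measured by a linear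
   functional vanishing on that ray, and by pigeonhole some generator is close
   to two distinct extremal rays, which is impossible. *)

From HB Require Import structures.
From mathcomp Require Import all_boot all_order all_algebra.
From mathcomp Require Import reals.
From mathcomp Require Import ring lra.
From Stdlib Require Import Classical FunctionalExtensionality.
Import Order.TTheory GRing.Theory Num.Theory.
Local Open Scope ring_scope.
Set Implicit Arguments. Unset Strict Implicit. Unset Printing Implicit Defensive.

Section ConicHull.
Variables (R : realType) (T : Type) (I : finType) (v : I -> T -> R).

Definition in_hull (f : T -> R) : Prop :=
  exists2 c : I -> R, (forall i, 0 <= c i) & forall x, f x = \sum_i c i * v i x.

Lemma in_hull0 : in_hull (fun _ => 0).
Proof. by exists (fun _ => 0) => // x; rewrite big1 // => i _; rewrite mul0r. Qed.

Lemma in_hullMD m g f : 0 <= m -> in_hull g -> in_hull f ->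
  in_hull (fun x => m * g x + f x).
Proof.
move=> m0 [e e0 he] [c c0 hc]; exists (fun i => m * e i + c i).
  by move=> i; rewrite addr_ge0 ?mulr_ge0.
move=> x; rewrite he hc mulr_sumr -big_split; apply: eq_bigr => i _ /=.
by rewrite mulrDl mulrA.
Qed.

Lemma in_hull_ray i t f : 0 <= t -> (forall x, f x = t * v i x) -> in_hull f.
Proof.
move=> t0 hf; exists (fun j => if j == i then t else 0).
  by move=> j; case: (j == i).
move=> x; rewrite hf (bigD1 i) //= eqxx big1 ?addr0 // => j /negbTE ->.
by rewrite mul0r.
Qed.

Lemma in_hull_sum (J : Type) (s : seq J) (c : J -> R) (g : J -> T -> R) :
  (forall j, 0 <= c j) -> (forall j, in_hull (g j)) ->
  in_hull (fun x => \sum_(j <- s) c j * g j x).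
Proof.
move=> c0 hg; elim: s => [|j s IH].
  have -> : (fun x => \sum_(j <- [::]) c j * g j x) = (fun _ => 0).
    by apply: functional_extensionality => x; rewrite big_nil.
  exact: in_hull0.
have -> : (fun x => \sum_(i <- j :: s) c i * g i x) =
          (fun x => c j * g j x + \sum_(i <- s) c i * g i x).
  by apply: functional_extensionality => x; rewrite big_cons.
exact: in_hullMD.
Qed.

Lemma functional_sum (L : (T -> R) -> R) (J : Type) (s : seq J) (c : J -> R)
    (g : J -> T -> R) :
  L (fun _ => 0) = 0 -> (forall a g h, L (fun x => a * g x + h x) = a * L g + L h) ->
  L (fun x => \sum_(j <- s) c j * g j x) = \sum_(j <- s) c j * L (g j).
Proof.
move=> L0 LMD; elim: s => [|j s IH].
  by rewrite big_nil -L0; congr L; apply: functional_extensionality => x; rewrite big_nil.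
by rewrite big_cons -IH -LMD; congr L; apply: functional_extensionality => x; rewrite big_cons.
Qed.

End ConicHull.

Lemma ler_term_sum (R : numDomainType) (I : finType) (F : I -> R) i :
  (forall j, 0 <= F j) -> F i <= \sum_j F j.
Proof. by move=> F0; rewrite (bigD1 i) //= lerDl sumr_ge0. Qed.

Lemma exists_ltr_of_sum (R : realDomainType) (I : finType) (c A B : I -> R) :
  (forall i, 0 <= c i) -> \sum_i c i * A i < \sum_i c i * B i -> exists i, A i < B i.
Proof.
move=> c0 hlt; apply: NNPP => hno; move: hlt; rewrite ltNge => /negP; apply.
apply: ler_sum => i _; rewrite ler_wpM2l // leNgt; apply/negP => h; apply: hno.
by exists i.
Qed.

Section SameRay.
Variables (R : realType) (T : Type).

Lemma same_ray_sym (u v : T -> R) : same_ray u v -> same_ray v u.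
Proof.
move=> [t t0 h]; exists t^-1; first by rewrite invr_gt0.
by move=> x; rewrite h mulKf ?gt_eqF.
Qed.

Lemma same_ray_trans (u v w : T -> R) : same_ray u v -> same_ray v w -> same_ray u w.
Proof.
move=> [t t0 h] [s s0 h']; exists (t * s); first by rewrite mulr_gt0.
by move=> x; rewrite h h' mulrA.
Qed.

End SameRay.

(** * Order cones and their extremal rays *)

Section OrderCone.
Variables (R : realType) (d : Order.disp_t) (P : finPOrderType d).
Notation C := (@order_cone R d P).

Lemma order_cone0 : C (fun _ => 0).
Proof. by split=> // x y _; rewrite lexx. Qed.

Lemma order_coneD f g : C f -> C g -> C (fun x => f x + g x).
Proof.
move=> [f0 fm] [g0 gm]; split=> [x|x y xy]; first by rewrite addr_ge0.
by rewrite lerD ?fm ?gm.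
Qed.

Lemma order_coneZ c f : 0 <= c -> C f -> C (fun x => c * f x).
Proof.
move=> c0 [f0 fm]; split=> [x|x y xy]; first by rewrite mulr_ge0.
by rewrite ler_wpM2l ?fm.
Qed.

Lemma order_cone_hull (I : finType) (v : I -> P -> R) f :
  (forall i, C (v i)) -> in_hull v f -> C f.
Proof.
move=> Cv [c c0 hc]; split=> [x|x y xy]; rewrite ?hc.
  by apply: sumr_ge0 => i _; rewrite mulr_ge0 //; case: (Cv i).
by apply: ler_sum => i _; rewrite ler_wpM2l //; case: (Cv i) => _ ->.
Qed.

Definition is_upset (U : {set P}) : Prop :=
  forall x y, x \in U -> (x <= y)%O -> y \in U.

Definition ind (U : {set P}) : P -> R := fun x => (x \in U)%:R.

Definition up (x : P) : {set P} := [set y | (x <= y)%O].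

Lemma ind_in (U : {set P}) x : x \in U -> ind U x = 1.
Proof. by rewrite /ind => ->. Qed.

Lemma ind_out (U : {set P}) x : x \notin U -> ind U x = 0.
Proof. by rewrite /ind => /negbTE ->. Qed.

Lemma ind_ge0 (U : {set P}) x : 0 <= ind U x.
Proof. by rewrite /ind; case: (x \in U). Qed.

Lemma ind_le1 (U : {set P}) x : ind U x <= 1.
Proof. by rewrite /ind; case: (x \in U). Qed.

Lemma order_cone_ind (U : {set P}) : is_upset U -> C (ind U).
Proof.
move=> uU; split=> [x|x y xy]; first exact: ind_ge0.
rewrite /ind; case xU: (x \in U); last by case: (y \in U).
by rewrite (uU x y xU xy).
Qed.

Lemma is_upset_up x : is_upset (up x).
Proof. by move=> y z; rewrite !inE => xy yz; exact: le_trans xy yz. Qed.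

Lemma up_inj : injective up.
Proof.
move=> x y hxy; have : y \in up x by rewrite hxy inE.
have : x \in up y by rewrite -hxy inE.
by rewrite !inE => yx xy; apply: le_anti; rewrite xy yx.
Qed.

Lemma same_ray_ind (U V : {set P}) : same_ray (ind U) (ind V) -> U = V.
Proof.
move=> [t t0 ht]; apply/setP => x; have := ht x; rewrite /ind.
case: (x \in U); case: (x \in V) => //=; rewrite ?mulr1n ?mulr0n ?mulr1 ?mulr0 => h.
- by move: (oner_neq0 R); rewrite h eqxx.
- by move: t0; rewrite -h ltxx.
Qed.

Definition support (f : P -> R) : {set P} := [set x | f x != 0].

(* Subtracting the minimum of [f] on its support times the indicator of the
   support keeps [f] in the cone and strictly shrinks the support. *)
Lemma order_cone_peel f : C f -> support f != set0 ->
  exists m W, [/\ 0 < m, is_upset W, W != set0, C (fun x => f x - m * ind W x) &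
    (#|support (fun x => (f x - m * ind W x)%R)| < #|support f|)%N].
Proof.
move=> [f0 fm] W0; set W := support f.
have [x0 x0W] := set0Pn _ W0.
have [xm xmW xmin] := @arg_minP _ R P x0 (fun x => x \in W) f x0W.
have fpos x : x \in W -> 0 < f x by rewrite inE => h; rewrite lt_def h f0.
have uW : is_upset W.
  move=> x y /fpos fx xy; rewrite inE gt_eqF //; exact: lt_le_trans fx (fm x y xy).
exists (f xm), W; split => //; first exact: fpos.
- split=> [x|x y xy]; rewrite /ind.
    case xW: (x \in W); first by rewrite mulr1 subr_ge0 xmin.
    by rewrite mulr0 subr0.
  case xW: (x \in W); first by rewrite (uW x y xW xy) !mulr1 lerD2r fm.
  move: xW; rewrite inE => /negbFE/eqP ->; rewrite mulr0 subr0.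
  by case yW: (y \in W); rewrite ?mulr1 ?subr_ge0 ?xmin ?mulr0 ?subr0.
- apply: proper_card; apply/properP; split.
    apply/subsetP => x; rewrite !inE /ind.
    case xW: (x \in W); first by move: xW; rewrite inE.
    by move: xW; rewrite inE => /negbFE/eqP ->; rewrite mulr0 subrr eqxx.
  by exists xm => //; rewrite inE /ind xmW mulr1 subrr eqxx.
Qed.

Lemma order_cone_layer_ind (Q : (P -> R) -> Prop) : Q (fun _ => 0) ->
  (forall f m W, C f -> Q f -> 0 < m -> is_upset W -> W != set0 ->
     Q (fun x => m * ind W x + f x)) ->
  forall f, C f -> Q f.
Proof.
move=> Q0 QS f Cf.
have supp0 g : support g = set0 -> g = (fun _ => 0).
  move=> s0; apply: functional_extensionality => x; apply/eqP; apply: contraT => gx.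
  have : x \in support g by rewrite inE.
  by rewrite s0 inE.
have [n] := ubnP #|support f|; elim: n f Cf => // n IH f Cf; rewrite ltnS => hn.
case: (eqVneq (support f) set0) => [/supp0 -> //|s0].
have [m [W [m0 uW W0 Cr hc]]] := order_cone_peel Cf s0.
have -> : f = (fun x => m * ind W x + (f x - m * ind W x)).
  by apply: functional_extensionality => y; rewrite addrC subrK.
by apply: QS => //; apply: IH => //; exact: leq_trans hc hn.
Qed.

Lemma extremal_ind_up x : extremal_vec C (ind (up x)).
Proof.
split; first exact/order_cone_ind/is_upset_up.
  by exists x; rewrite ind_in ?oner_eq0 // inE.
move=> u w [u0 um] [w0 wm] hs; exists (u x) => // y.
case xy: (x <= y)%O.
  rewrite ind_in ?inE // mulr1.
  have := hs x; have := hs y; rewrite !ind_in ?inE ?lexx // => h1 h2.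
  have := um x y xy; have := wm x y xy; lra.
rewrite ind_out ?inE ?xy // mulr0.
have := hs y; rewrite ind_out ?inE ?xy // => h.
have := u0 y; have := w0 y; lra.
Qed.

Lemma extremal_same_ray u v : same_ray u v -> extremal_vec C v -> extremal_vec C u.
Proof.
move=> [c c0 hu] [Cv [x vx] hv].
have -> : u = (fun x => c * v x) by apply: functional_extensionality.
split; first exact: order_coneZ (ltW c0) Cv.
  by exists x; rewrite mulf_neq0 // gt_eqF.
move=> u1 u2 Cu1 Cu2 hs.
have ci : 0 <= c^-1 by rewrite invr_ge0 ltW.
have hs' y : v y = c^-1 * u1 y + c^-1 * u2 y by rewrite -mulrDr -hs mulKf ?gt_eqF.
have [t t0 ht] := hv _ _ (order_coneZ ci Cu1) (order_coneZ ci Cu2) hs'.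
exists t => // y; have := ht y; move/(congr1 (fun z => c * z)).
by rewrite mulVKf ?gt_eqF // => ->; rewrite mulrCA.
Qed.

Lemma extremal_same_ray_ind v : extremal_vec C v ->
  exists U, [/\ is_upset U, same_ray v (ind U) & extremal_vec C (ind U)].
Proof.
move=> ev; have [Cv [x vx] hv] := ev.
have sv0 : support v != set0 by apply/set0Pn; exists x; rewrite inE.
have [m [W [m0 uW W0 Cr _]]] := order_cone_peel Cv sv0.
have hs y : v y = m * ind W y + (v y - m * ind W y) by rewrite addrC subrK.
have [t t0 ht] := hv _ _ (order_coneZ (ltW m0) (order_cone_ind uW)) Cr hs.
have [w0 w0W] := set0Pn _ W0.
have tpos : 0 < t.
  rewrite lt_def t0 andbT; apply: contraTneq m0 => tz.
  by have := ht w0; rewrite tz mul0r ind_in // mulr1 => ->; rewrite ltxx.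
have vW : same_ray v (ind W).
  exists (m / t); first by rewrite divr_gt0.
  by move=> y; rewrite mulrAC ht mulrAC mulfV ?gt_eqF ?mul1r.
by exists W; split => //; apply: extremal_same_ray ev; exact: same_ray_sym.
Qed.

(* A decomposition [ind U = u + w] inside the cone forces [u] to be constant
   on the upper set of each point of [U]; the level sets of [u] then split [U]. *)
Lemma ind_split_of_decomp U u w : is_upset U -> C u -> C w ->
  (forall x, ind U x = u x + w x) ->
  ~ (exists2 t, 0 <= t & forall x, u x = t * ind U x) ->
  exists A B, [/\ is_upset A, is_upset B, forall x, ind U x = ind A x + ind B x,
                  (#|A| < #|U|)%N & (#|B| < #|U|)%N].
Proof.
move=> uU [u0 um] [w0 wm] hs hno.
have uout x : x \notin U -> u x = 0.
  by move=> xU; have := hs x; rewrite ind_out // => h; have := u0 x; have := w0 x; lra.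
have ucst x y : x \in U -> (x <= y)%O -> u x = u y.
  move=> xU xy; have := hs x; have := hs y; rewrite !ind_in ?(uU x y) // => h1 h2.
  have := um x y xy; have := wm x y xy; lra.
have [x0 x0U | U0] := pickP (fun x => x \in U); last first.
  by case: hno; exists 0 => // x; rewrite mul0r uout // U0.
have [y0 /andP [y0U uy0] | ucst0] := pickP (fun y => (y \in U) && (u y != u x0)); last first.
  case: hno; exists (u x0) => // x; case xU: (x \in U); last by rewrite ind_out ?xU ?mulr0 ?uout ?xU.
  by move: (ucst0 x); rewrite xU /= => /negbFE/eqP ->; rewrite ind_in ?mulr1.
set A := [set y in U | u y == u x0]; set B := [set y in U | u y != u x0].
have AU : A \subset U by apply/subsetP => y; rewrite inE => /andP [].
have BU : B \subset U by apply/subsetP => y; rewrite inE => /andP [].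
exists A, B; split.
- move=> x y; rewrite !inE => /andP [xU ux] xy.
  by rewrite (uU x y xU xy) -(ucst x y xU xy).
- move=> x y; rewrite !inE => /andP [xU ux] xy.
  by rewrite (uU x y xU xy) -(ucst x y xU xy).
- move=> x; rewrite /ind !inE.
  case: (x \in U) => /=; last by rewrite addr0.
  by case: (u x == u x0); rewrite /= ?addr0 ?add0r.
- apply: proper_card; apply/properP; split => //; exists y0 => //.
  by rewrite inE y0U /= (negbTE uy0).
- apply: proper_card; apply/properP; split => //; exists x0 => //.
  by rewrite inE x0U /= eqxx.
Qed.

Lemma nonextremal_ind_split U : is_upset U -> U != set0 -> ~ extremal_vec C (ind U) ->
  exists A B, [/\ is_upset A, is_upset B, forall x, ind U x = ind A x + ind B x,
                  (#|A| < #|U|)%N & (#|B| < #|U|)%N].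
Proof.
move=> uU U0 hne; apply: NNPP => hno; apply: hne; split.
- exact: order_cone_ind.
- by have [x xU] := set0Pn _ U0; exists x; rewrite ind_in ?oner_eq0.
move=> u w Cu Cw hs; apply: NNPP => hnot; apply: hno.
exact: ind_split_of_decomp uU Cu Cw hs hnot.
Qed.

Lemma order_cone_extremal_hull q (v : 'I_q -> P -> R) :
  (forall u, extremal_vec C u -> exists i, same_ray u (v i)) ->
  forall f, C f -> in_hull v f.
Proof.
move=> hv.
have ind0 : ind set0 = (fun _ => 0).
  by apply: functional_extensionality => x; rewrite ind_out ?inE.
have hind U : is_upset U -> in_hull v (ind U).
  have [n] := ubnP #|U|; elim: n U => // n IH U; rewrite ltnS => hn uU.
  have [->|U0] := eqVneq U set0; first by rewrite ind0; exact: in_hull0.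
  have [he|hne] := classic (extremal_vec C (ind U)).
    by have [i [t t0 ht]] := hv _ he; exact: in_hull_ray (ltW t0) ht.
  have [A [B [uA uB hs cA cB]]] := nonextremal_ind_split uU U0 hne.
  have -> : ind U = (fun x => 1 * ind B x + ind A x).
    by apply: functional_extensionality => x; rewrite hs mul1r addrC.
  by apply: in_hullMD => //; apply: IH => //; exact: leq_trans hn.
apply: order_cone_layer_ind; first exact: in_hull0.
by move=> f m W Cf hf m0 uW _; apply: in_hullMD (ltW m0) (hind W uW) hf.
Qed.

Lemma extremal_ind_neq0 U : extremal_vec C (ind U) -> U != set0.
Proof.
by move=> [_ [x hx] _]; apply: contra_neq hx => U0; rewrite ind_out // U0 inE.
Qed.

Definition mass (f : P -> R) : R := \sum_x f x.

(* Measures how far an element of the cone is from the ray of [ind U]. *)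
Definition ray_defect (U : {set P}) (f : P -> R) : R :=
  \sum_x (if x \in U then 0 else f x) +
  \sum_x \sum_y (if (x <= y)%O && ((x \in U) == (y \in U)) then f y - f x else 0).

Lemma mass0 : mass (fun _ => 0) = 0.
Proof. by rewrite /mass big1. Qed.

Lemma massMD a g h : mass (fun x => a * g x + h x) = a * mass g + mass h.
Proof. by rewrite /mass mulr_sumr -big_split. Qed.

Lemma ray_defect0 U : ray_defect U (fun _ => 0) = 0.
Proof.
rewrite /ray_defect big1 ?add0r => [|x _]; last by case: ifP.
by rewrite big1 // => x _; rewrite big1 // => y _; case: ifP => _ //; rewrite oppr0.
Qed.

Lemma ray_defectMD U a g h :
  ray_defect U (fun x => a * g x + h x) = a * ray_defect U g + ray_defect U h.
Proof.
rewrite /ray_defect mulrDr addrACA; congr (_ + _).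
  rewrite mulr_sumr -big_split; apply: eq_bigr => x _ /=.
  by case: (x \in U); rewrite ?mulr0 ?addr0.
rewrite mulr_sumr -big_split; apply: eq_bigr => x _ /=.
rewrite mulr_sumr -big_split; apply: eq_bigr => y _ /=.
by case: ifP => _; rewrite ?mulr0 ?addr0 // mulrBr opprD addrACA.
Qed.

Lemma ray_defect_ind U : ray_defect U (ind U) = 0.
Proof.
rewrite /ray_defect big1 ?add0r => [|x _]; last first.
  by case xU: (x \in U); rewrite ?ind_out ?xU.
rewrite big1 // => x _; rewrite big1 // => y _.
by case: ifP => // /andP [_ /eqP h]; rewrite /ind h subrr.
Qed.

Lemma ray_defect_ge0 U f : C f -> 0 <= ray_defect U f.
Proof.
move=> [f0 fm]; rewrite addr_ge0 //; apply: sumr_ge0 => x _.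
  by case: (x \in U).
by apply: sumr_ge0 => y _; case: ifP => // /andP [xy _]; rewrite subr_ge0 fm.
Qed.

Lemma ray_defect_le U g b : 0 <= b -> (forall x, `|g x| <= b) ->
  ray_defect U g <= 3 * #|P|%:R ^+ 2 * b.
Proof.
move=> b0 hg; apply: (@le_trans _ _ (\sum_(x : P) b + \sum_(x : P) \sum_(y : P) (b + b))).
  apply: lerD; apply: ler_sum => x _; last apply: ler_sum => y _.
  - by case: (x \in U) => //; exact: le_trans (ler_norm _) (hg x).
  - case: ifP => _; last by rewrite addr_ge0.
    apply: le_trans (ler_norm _) _; apply: le_trans (ler_normB _ _) _.
    exact: lerD.
have pp : (#|P|%:R : R) <= #|P|%:R ^+ 2.
  by move: #|P| => n; rewrite -natrX ler_nat; case: n => // n; rewrite expnS leq_pmulr ?expn_gt0.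
have := ler_wpM2l b0 pp; rewrite !sumr_const -mulrnA -[b *+ _]mulr_natr -[(b + b) *+ _]mulr_natr natrM.
move: (#|P|%:R : R) => n; lra.
Qed.

Lemma ray_defect_ind_ge1 U W : is_upset U -> extremal_vec C (ind U) -> is_upset W ->
  W != set0 -> W != U -> 1 <= ray_defect U (ind W).
Proof.
move=> uU eU uW W0 WU.
have t1ge0 x : 0 <= (if x \in U then 0 else ind W x) by case: ifP => // _; exact: ind_ge0.
have t2ge0 x y : 0 <= (if (x <= y)%O && ((x \in U) == (y \in U))
                       then ind W y - ind W x else 0).
  by case: ifP => // /andP [xy _]; rewrite subr_ge0; case: (order_cone_ind uW) => _ ->.
rewrite /ray_defect.
have [x /andP [xW xU] | WsubU] := pickP (fun x => (x \in W) && (x \notin U)).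
  apply: ler_wpDr; first by do 2!apply: sumr_ge0 => ? _.
  by apply: le_trans _ (ler_term_sum x t1ge0); rewrite (negbTE xU) ind_in.
have {}WsubU : W \subset U.
  by apply/subsetP => x xW; move: (WsubU x); rewrite xW /= => /negbFE.
(* Otherwise [U :\: W] is an upset and [ind U = ind W + ind (U :\: W)]
   would contradict extremality of [ind U]; so some [x <= y] crosses [W]. *)
have [x [y [xU xW xy yW]]] : exists x y, [/\ x \in U, x \notin W, (x <= y)%O & y \in W].
  apply: NNPP => hn.
  have uD : is_upset (U :\: W).
    move=> x y; rewrite !inE => /andP [xW xU] xy; rewrite (uU x y xU xy) andbT.
    by apply/negP => yW; apply: hn; exists x, y.
  have hs z : ind U z = ind W z + ind (U :\: W) z.
    rewrite /ind !inE; case zW: (z \in W); last by rewrite add0r.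
    by rewrite (subsetP WsubU z zW) addr0.
  have [_ _ hext] := eU.
  have [t t0 ht] := hext _ _ (order_cone_ind uW) (order_cone_ind uD) hs.
  have [w0 w0W] := set0Pn _ W0.
  have t1 : t = 1 by have := ht w0; rewrite !ind_in ?(subsetP WsubU) // mulr1.
  by move: WU; rewrite (@same_ray_ind W U) ?eqxx //; exists 1 => // z; rewrite -t1.
apply: ler_wpDl; first by apply: sumr_ge0 => ? _.
apply: le_trans _ (ler_term_sum x (fun z => sumr_ge0 _ (fun y _ => t2ge0 z y))).
apply: le_trans _ (ler_term_sum y (t2ge0 x)).
by rewrite xy xU (subsetP WsubU y yW) /= ind_in // ind_out // subr0.
Qed.

Lemma mass_ind_le (W : {set P}) : mass (ind W) <= #|P|%:R.
Proof.
apply: le_trans (_ : \sum_(x : P) (1 : R) <= _); last by rewrite sumr_const.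
by apply: ler_sum => x _; exact: ind_le1.
Qed.

Lemma mass_le_ray_defects U V : is_upset U -> is_upset V ->
  extremal_vec C (ind U) -> extremal_vec C (ind V) -> U != V ->
  forall h, C h -> mass h <= #|P|%:R * (ray_defect U h + ray_defect V h).
Proof.
move=> uU uV eU eV UV.
apply: order_cone_layer_ind => [|f m W Cf IH m0 uW W0].
  by rewrite mass0 !ray_defect0 addr0 mulr0.
have hW : 1 <= ray_defect U (ind W) + ray_defect V (ind W).
  have gU := ray_defect_ge0 U (order_cone_ind uW).
  have gV := ray_defect_ge0 V (order_cone_ind uW).
  have [WU|WU] := eqVneq W U.
    have WV : W != V by rewrite WU.
    by have := ray_defect_ind_ge1 uV eV uW W0 WV; lra.
  by have := ray_defect_ind_ge1 uU eU uW W0 WU; lra.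
have p0 : 0 <= #|P|%:R :> R by [].
have := ler_wpM2l (ltW m0) (le_trans (mass_ind_le W) (ler_peMr p0 hW)).
rewrite massMD !ray_defectMD; move: IH.
move: (#|P|%:R : R) (mass f) (mass (ind W)) => p mf mW.
move: (ray_defect U f) (ray_defect V f) (ray_defect U (ind W)) (ray_defect V (ind W)).
by move=> a b c e; nra.
Qed.

(* On [ind U + g] the defect is at most [3 p^2 b] while the mass is at least
   [1 - b]; averaging over the combination yields the witness. *)
Lemma near_ray_witness (I : finType) (a : I -> P -> R) U g b :
  (forall i, C (a i)) -> U != set0 -> in_hull a (fun x => ind U x + g x) ->
  0 <= b -> (forall x, `|g x| <= b) -> (12 * #|P|%:R ^+ 3 + 1) * b < 1 ->
  exists i, 4 * #|P|%:R * ray_defect U (a i) < mass (a i).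
Proof.
move=> Ca U0 hY b0 hg hb; have [c c0 hc] := hY.
have hull_sum L : L (fun _ => 0) = 0 ->
    (forall a g h, L (fun x => a * g x + h x) = a * L g + L h) ->
    L (fun x => ind U x + g x) = \sum_i c i * L (a i).
  move=> L0 LMD; rewrite -functional_sum //.
  by congr L; apply: functional_extensionality.
have defectY : ray_defect U (fun x => ind U x + g x) <= 3 * #|P|%:R ^+ 2 * b.
  have -> : (fun x => ind U x + g x) = (fun x => 1 * ind U x + g x).
    by apply: functional_extensionality => x; rewrite mul1r.
  by rewrite ray_defectMD ray_defect_ind mulr0 add0r; exact: ray_defect_le.
have massY : 1 - b <= mass (fun x => ind U x + g x).
  have [x0 x0U] := set0Pn _ U0; have [Y0 _] := order_cone_hull Ca hY.
  apply: le_trans _ (ler_term_sum x0 Y0); rewrite /= ind_in //.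
  by have := hg x0; rewrite ler_norml; lra.
apply: exists_ltr_of_sum c0 _.
under eq_bigr do rewrite mulrCA.
rewrite -mulr_sumr -hull_sum ?ray_defect0 //; last exact: ray_defectMD.
rewrite -hull_sum ?mass0 //; last exact: massMD.
apply: le_lt_trans (ler_wpM2l _ defectY) _; first by rewrite mulr_ge0.
apply: lt_le_trans massY; move: hb; move: (#|P|%:R : R) => p; lra.
Qed.

(* Pigeonhole: with fewer generators than rays, one [a i] would witness two
   distinct rays, contradicting [mass_le_ray_defects]. *)
Lemma card_le_of_hull_near_extremal_rays r s (U : 'I_r -> {set P})
    (a : 'I_s -> P -> R) (g : 'I_r -> P -> R) b :
  (forall j, is_upset (U j)) -> (forall j, extremal_vec C (ind (U j))) ->
  injective U -> (forall i, C (a i)) ->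
  (forall j, in_hull a (fun x => ind (U j) x + g j x)) ->
  0 <= b -> (forall j x, `|g j x| <= b) -> (12 * #|P|%:R ^+ 3 + 1) * b < 1 ->
  (r <= s)%N.
Proof.
move=> uU eU Uinj Ca hY b0 hg hb.
have /fin_all_exists [F hF] j :
    exists i, 4 * #|P|%:R * ray_defect (U j) (a i) < mass (a i).
  exact: near_ray_witness Ca (extremal_ind_neq0 (eU j)) (hY j) b0 (hg j) hb.
rewrite -[r]card_ord -[s]card_ord; apply: (@leq_card _ _ F) => j0 j1 hF01.
apply: Uinj; apply: NNPP => /eqP UV.
have := mass_le_ray_defects (uU j0) (uU j1) (eU j0) (eU j1) UV (Ca (F j0)).
have := ray_defect_ge0 (U j0) (Ca (F j0)); have := ray_defect_ge0 (U j1) (Ca (F j0)).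
have := hF j0; have := hF j1; rewrite -hF01; have : 0 <= #|P|%:R :> R by [].
move: (#|P|%:R : R) (mass (a (F j0))) => p m.
move: (ray_defect (U j0) (a (F j0))) (ray_defect (U j1) (a (F j0))) => x y.
nra.
Qed.

Definition up_ind (k : 'I_#|P|) : P -> R := ind (up (enum_val k)).

(* Triangularity: at a minimal index with a nonzero coefficient, evaluating
   at [enum_val k] only sees [up_ind k]. *)
Lemma up_ind_free (c : 'I_#|P| -> R) :
  (forall x, \sum_k c k * up_ind k x = 0) -> forall k, c k = 0.
Proof.
move=> hc k; apply: NNPP => /eqP ck0.
pose down (k : 'I_#|P|) := #|[set z : P | (z <= enum_val k)%O]|.
have [m cm0 mmin] := @arg_minnP _ k (fun k => c k != 0) down ck0.
move/eqP: cm0; apply; have := hc (enum_val m).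
rewrite (bigD1 m) //= /up_ind ind_in ?inE // mulr1 big1 ?addr0 // => j jm.
have [->|cj0] := eqVneq (c j) 0; first by rewrite mul0r.
rewrite ind_out ?mulr0 // inE; apply/negP => jm_le.
have := mmin j cj0; rewrite leqNgt => /negP; apply.
apply: proper_card; apply/properP; split.
  by apply/subsetP => z; rewrite !inE => hz; exact: le_trans hz jm_le.
exists (enum_val m); first by rewrite inE.
rewrite inE; apply: contra jm => mj_le; apply/eqP/enum_val_inj/le_anti.
by rewrite jm_le mj_le.
Qed.

End OrderCone.

Section FreeFamily.
Variables (R : realType) (T : finType) (u : 'I_#|T| -> T -> R).
Hypothesis u_free :
  forall c : 'I_#|T| -> R, (forall x, \sum_i c i * u i x = 0) -> forall i, c i = 0.

Lemma free_coords_uniq (c c' : 'I_#|T| -> R) :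
  (forall x, \sum_i c i * u i x = \sum_i c' i * u i x) -> forall i, c i = c' i.
Proof.
move=> h i; apply/eqP; rewrite -subr_eq0; apply/eqP.
apply: (@u_free (fun i => c i - c' i) _ i) => x.
under eq_bigr do rewrite mulrBl.
by rewrite sumrB h subrr.
Qed.

(* The coordinates are given by the inverse of the (square) matrix of [u]. *)
Lemma free_coords_bounded : exists coef : (T -> R) -> 'I_#|T| -> R, exists K : R,
  [/\ 0 <= K, forall f x, f x = \sum_i coef f i * u i x &
      forall f b, (forall x, `|f x| <= b) -> forall i, `|coef f i| <= K * b].
Proof.
pose U : 'M[R]_#|T| := \matrix_(i, j) u i (enum_val j).
have Uunit : U \in unitmx.
  rewrite -row_free_unit; apply: inj_row_free => v hv; apply/rowP => i.
  rewrite mxE; apply: (@u_free (fun i => v 0 i)) => x.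
  have := congr1 (fun M : 'M_(1, #|T|) => M 0 (enum_rank x)) hv.
  rewrite /= !mxE => h; rewrite -[RHS]h; apply: eq_bigr => k _; by rewrite mxE enum_rankK.
pose V := invmx U.
exists (fun f i => \sum_j f (enum_val j) * V j i), (\sum_i \sum_j `|V j i|); split.
- by do 2!apply: sumr_ge0 => ? _.
- move=> f x; pose F : 'rV[R]_#|T| := \row_j f (enum_val j).
  have := congr1 (fun M : 'M_(1, #|T|) => M 0 (enum_rank x)) (mulmxKV Uunit F).
  rewrite /= !mxE enum_rankK => <-; apply: eq_bigr => i _.
  rewrite !mxE enum_rankK; congr (_ * _); apply: eq_bigr => j _; by rewrite mxE.
- move=> f b hb i.
  have b0 : 0 <= b by exact: le_trans (normr_ge0 _) (hb (enum_val i)).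
  apply: le_trans (ler_norm_sum _ _ _) _.
  apply: (@le_trans _ _ (\sum_j b * `|V j i|)).
    by apply: ler_sum => j _; rewrite normrM ler_wpM2r.
  rewrite -mulr_sumr mulrC ler_wpM2r //.
  exact: (ler_term_sum i (fun k => sumr_ge0 _ (fun j _ => normr_ge0 (V j k)))).
Qed.

Lemma free_neq0 k : exists x, u k x != 0.
Proof.
apply: NNPP => h; have /eqP : (if k == k then 1 else 0) = 0 :> R.
  apply: (@u_free (fun j => if j == k then 1 else 0)) => x.
  rewrite (bigD1 k) //= eqxx mul1r big1 ?addr0 => [|j /negbTE ->]; last by rewrite mul0r.
  by apply: NNPP => hx; apply: h; exists x; apply/eqP.
by rewrite eqxx oner_eq0.
Qed.

Variable C : (T -> R) -> Prop.
Hypothesis u_hull : forall f, C f <-> in_hull u f.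

(* Split [v = c_k u_k + (v - c_k u_k)] inside the cone at a nonzero coordinate. *)
Lemma extremal_same_ray_basis v : extremal_vec C v -> exists k, same_ray v (u k).
Proof.
move=> [Cv [x vx] hv]; have [c c0 hc] := (u_hull v).1 Cv.
have [k ck] : exists k, c k != 0.
  apply: NNPP => h; move: vx; rewrite hc big1 ?eqxx // => k _.
  suff -> : c k = 0 by rewrite mul0r.
  by apply: NNPP => hk; apply: h; exists k; apply/eqP.
have Cuk : C (fun x => c k * u k x).
  apply/u_hull; exists (fun j => if j == k then c k else 0) => [j|y].
    by case: (j == k).
  by rewrite (bigD1 k) //= eqxx big1 ?addr0 // => j /negbTE ->; rewrite mul0r.
have Crest : C (fun x => v x - c k * u k x).
  apply/u_hull; exists (fun j => if j == k then 0 else c j) => [j|y].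
    by case: (j == k).
  rewrite hc (bigD1 k) //= [in RHS](bigD1 k) //= eqxx mul0r add0r addrC addrK.
  by apply: eq_bigr => j /negbTE ->.
have [t t0 ht] := hv _ _ Cuk Crest (fun y => esym (subrKC _ _)).
have tpos : 0 < t.
  rewrite lt_def t0 andbT; have [y uy] := free_neq0 k.
  apply: contraNneq uy => tz; move: (ht y); rewrite tz mul0r => /eqP.
  by rewrite mulf_eq0 (negbTE ck).
exists k, (c k / t); first by rewrite divr_gt0 // lt_def ck c0.
by move=> y; rewrite mulrAC ht mulrAC mulfV ?gt_eqF ?mul1r.
Qed.

End FreeFamily.

Lemma simplicial_num_extremal_rays_le (R : realType) (T : finType)
    (C : (T -> R) -> Prop) q :
  simplicial C -> num_extremal_rays C q -> (q <= #|T|)%N.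
Proof.
move=> [u [u_free u_hull]] [v [v_ext v_inj _]].
have /fin_all_exists [f hf] i := extremal_same_ray_basis u_free u_hull (v_ext i).
suff f_inj : injective f by have := leq_card f f_inj; rewrite !card_ord.
move=> i j hij; apply: v_inj; apply: same_ray_trans (hf i) _.
by rewrite hij; exact: same_ray_sym.
Qed.

(* List the image of [g] first, then the rest of ['I_q], and keep [r] items. *)
Lemma injective_prefix_extension p q r (g : 'I_p -> 'I_q) : injective g -> (r <= q)%N ->
  exists f : 'I_r -> 'I_q,
    injective f /\ forall (i : 'I_r) (k : 'I_p), val i = val k -> f i = g k.
Proof.
move=> g_inj rq.
pose s1 := [seq g k | k <- enum 'I_p].
pose s := s1 ++ [seq i <- enum 'I_q | i \notin s1].
have s_uniq : uniq s.
  rewrite cat_uniq map_inj_uniq // enum_uniq filter_uniq ?enum_uniq // andbT /=.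
  by apply/hasPn => i; rewrite mem_filter => /andP [].
have s_size : size s = q.
  move/card_uniqP: s_uniq => <-; rewrite -[RHS](card_ord q); apply: eq_card => i.
  by rewrite mem_cat mem_filter mem_enum; case: (i \in s1).
have lt_s (i : 'I_r) : (i < size s)%N by rewrite s_size (leq_trans (ltn_ord i) rq).
exists (fun i => nth (widen_ord rq i) s i); split.
  move=> i j /eqP; rewrite (set_nth_default (widen_ord rq i) _ (lt_s j)).
  by rewrite nth_uniq // => /eqP /val_inj.
move=> i k ik; rewrite nth_cat size_map size_enum_ord ik ltn_ord (nth_map k).
  by rewrite nth_ord_enum.
by rewrite size_enum_ord ltn_ord.
Qed.

Section ExtremalUpsets.
Variables (R : realType) (d : Order.disp_t) (P : finPOrderType d).
Notation C := (@order_cone R d P).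

Lemma num_extremal_rays_upsets q : num_extremal_rays C q ->
  exists W : 'I_q -> {set P},
    [/\ forall i, is_upset (W i), forall i, extremal_vec C (ind R (W i)),
        injective W & forall x, exists i, W i = up x].
Proof.
move=> [v [v_ext v_inj v_all]].
have /fin_all_exists [W hW] i := extremal_same_ray_ind (v_ext i).
exists W; split.
- by move=> i; case: (hW i).
- by move=> i; case: (hW i).
- move=> i j Wij; apply: v_inj; have [_ ri _] := hW i; have [_ rj _] := hW j.
  by apply: same_ray_trans ri _; rewrite Wij; exact: same_ray_sym.
move=> x; have [i ri] := v_all _ (extremal_ind_up R x); exists i.
by have [_ rw _] := hW i; apply/esym/same_ray_ind; exact: same_ray_trans ri rw.
Qed.

Lemma extremal_upsets_with_principal q r : num_extremal_rays C q -> (r <= q)%N ->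
  exists U : 'I_r -> {set P},
    [/\ forall i, is_upset (U i), forall i, extremal_vec C (ind R (U i)), injective U &
        forall (i : 'I_r) (k : 'I_#|P|), val i = val k -> U i = up (enum_val k)].
Proof.
move=> hq rq; have [W [W_up W_ext W_inj W_all]] := num_extremal_rays_upsets hq.
have /fin_all_exists [idx idxE] := W_all.
have g_inj : injective (fun k : 'I_#|P| => idx (enum_val k)).
  by move=> k l hkl; move: (idxE (enum_val k)); rewrite hkl idxE => /up_inj /enum_val_inj.
have [f [f_inj fE]] := injective_prefix_extension g_inj rq.
exists (W \o f); split => [i|i|i j /W_inj /f_inj //|i k ik] /=.
- exact: W_up.
- exact: W_ext.
- by rewrite (fE i k ik) idxE.
Qed.

End ExtremalUpsets.

(** * Nonnegative decompositions *)

Section NonnegDecomposition.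
Variables (R : realType) (d1 d2 : Order.disp_t).
Variables (P1 : finPOrderType d1) (P2 : finPOrderType d2).
Notation C1 := (@order_cone R d1 P1).
Notation C2 := (@order_cone R d2 P2).

Lemma ND_eq_le r (M : P1 -> P2 -> R) : ND_eq r M -> ND_le r M.
Proof. by case: r => [|r] // []. Qed.

Lemma ND_le_widen r s (M : P1 -> P2 -> R) : (r <= s)%N -> ND_le r M -> ND_le s M.
Proof.
move=> rs [a [b [Ca Cb hM]]].
pose pad T (f : 'I_r -> T -> R) (i : 'I_s) : T -> R :=
  if insub (val i) is Some j then f j else fun _ => 0.
exists (pad _ a), (pad _ b); split.
- by move=> i; rewrite /pad; case: insub => [j|]; [exact: Ca | exact: order_cone0].
- by move=> i; rewrite /pad; case: insub => [j|]; [exact: Cb | exact: order_cone0].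
move=> x y; rewrite hM.
pose G (n : nat) := if insub n : option 'I_r is Some j then a j x * b j y else 0.
transitivity (\sum_(i < r) G i); first by apply: eq_bigr => i _; rewrite /G valK.
rewrite (big_ord_widen s G rs) big_mkcond; apply: eq_bigr => i _.
rewrite /G /pad; case: ifP => h; first by case: insub => [j|] //=; rewrite mul0r.
by rewrite insubN ?h // mul0r.
Qed.

Lemma ND_le_of_hull r n (G : 'I_r -> P1 -> R) (Y : 'I_n -> P1 -> R)
    (b : 'I_n -> P2 -> R) (M : P1 -> P2 -> R) :
  (forall i, C1 (G i)) -> (forall j, C2 (b j)) -> (forall j, in_hull G (Y j)) ->
  (forall x y, M x y = \sum_j Y j x * b j y) -> ND_le r M.
Proof.
move=> CG Cb /fin_all_exists2 [c c0 hc] hM.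
exists G, (fun i y => \sum_j c j i * b j y); split => // [i|x y].
  by apply: (order_cone_hull Cb); exists (fun j => c j i).
rewrite hM; transitivity (\sum_j \sum_i c j i * G i x * b j y).
  by apply: eq_bigr => j _; rewrite hc mulr_suml.
rewrite exchange_big; apply: eq_bigr => i _; rewrite mulr_sumr; apply: eq_bigr => j _.
by rewrite mulrCA mulrA.
Qed.

Lemma ND_le_num_extremal_rays q r (M : P1 -> P2 -> R) :
  num_extremal_rays C1 q -> ND_le r M -> ND_le q M.
Proof.
move=> [v [v_ext _ v_all]] [a [b [Ca Cb hM]]].
apply: (ND_le_of_hull (G := v) (Y := a) _ Cb _ hM) => [k|i].
  by case: (v_ext k).
exact: (@order_cone_extremal_hull R d1 P1 q v v_all (a i) (Ca i)).
Qed.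

Lemma ND_le_coords_in_hull s (u : 'I_#|P2| -> P2 -> R) (Y : 'I_#|P2| -> P1 -> R)
    (M : P1 -> P2 -> R) :
  (forall c : 'I_#|P2| -> R, (forall y, \sum_j c j * u j y = 0) -> forall j, c j = 0) ->
  (forall f, C2 f <-> in_hull u f) ->
  (forall x y, M x y = \sum_j Y j x * u j y) -> ND_le s M ->
  exists a : 'I_s -> P1 -> R, (forall i, C1 (a i)) /\ forall j, in_hull a (Y j).
Proof.
move=> u_free u_hull hY [a [b [Ca Cb hab]]].
have /fin_all_exists2 [beta beta0 hbeta] i := (u_hull (b i)).1 (Cb i).
exists a; split => // j; exists (fun i => beta i j) => // x.
apply: (@free_coords_uniq _ _ _ u_free (fun j => Y j x) (fun j => \sum_i beta i j * a i x)) => y.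
rewrite -hY hab; transitivity (\sum_i \sum_j beta i j * a i x * u j y).
  apply: eq_bigr => i _; rewrite hbeta mulr_sumr.
  by apply: eq_bigr => k _; rewrite mulrCA mulrA.
by rewrite exchange_big; apply: eq_bigr => k _; rewrite mulr_suml.
Qed.

Lemma ND_eq_of_le r (M : P1 -> P2 -> R) :
  ND_le r M -> (forall s, (s < r)%N -> ~ ND_le s M) -> ND_eq r M.
Proof. by case: r => [|r] // Mle Mlt; split => //; exact: Mlt. Qed.

End NonnegDecomposition.

Lemma ND_le_transpose (R : realType) (d1 d2 : Order.disp_t) (P1 : finPOrderType d1)
    (P2 : finPOrderType d2) r (M : P1 -> P2 -> R) :
  ND_le r M -> ND_le r (fun y x => M x y).
Proof.
move=> [a [b [Ca Cb hM]]]; exists b, a; split => // y x.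
by rewrite hM; apply: eq_bigr => i _; rewrite mulrC.
Qed.

(* Among the [k+1] values [e / (j+2)], one avoids the [k] eigenvalues of the
   compressed [k x k] block of [-A]. *)
Lemma exists_full_rank_perturbation (F : realFieldType) m n (A : 'M[F]_(m, n)) e :
  0 < e -> exists2 t, 0 < t < e & (minn m n <= \rank (A + t *: pid_mx (minn m n))%R)%N.
Proof.
move=> e0; set k := minn m n.
pose L : 'M[F]_(k, m) := pid_mx k; pose Rt : 'M[F]_(n, k) := pid_mx k.
pose B := L *m A *m Rt.
pose ts := [seq e / (j.+2)%:R | j <- iota 0 k.+1].
have : ~~ all (fun t => root (char_poly B) (- t)) ts.
  apply/negP => hall.
  have := @max_poly_roots _ (char_poly B) [seq - t | t <- ts]
    (monic_neq0 (char_poly_monic B)).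
  rewrite all_map; move/(_ hall).
  rewrite map_inj_uniq; last exact: oppr_inj.
  rewrite map_inj_uniq ?iota_uniq; last first.
    by move=> a b /(mulfI (negbT (gt_eqF e0)))/invr_inj/eqP; rewrite eqr_nat => /eqP [].
  by rewrite !size_map size_iota size_char_poly ltnn => /(_ isT).
case/allPn => t /mapP [j _ ->] hroot; set t' := e / (j.+2)%:R.
exists t'; first by rewrite divr_gt0 //= ltr_pdivrMr ?ltr0n // ltr_pMr // ltr1n.
have hB : L *m (A + t' *: pid_mx k) *m Rt = B + t'%:M.
  rewrite mulmxDr mulmxDl -scalemxAr -scalemxAl /L /Rt !mul_pid_mx.
  have km : minn m k = k by apply/minn_idPr; rewrite geq_minl.
  have kn : minn n k = k by apply/minn_idPr; rewrite geq_minr.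
  by rewrite !minnn km minnn kn pid_mx_1 scalemx1.
have Bunit : B + t'%:M \in unitmx.
  rewrite unitmxE unitfE; apply/negP => /det0P [v v0 hv].
  move: hroot; rewrite -eigenvalue_root_char => /negP; apply.
  apply/eigenvalueP; exists v => //.
  move: hv; rewrite mulmxDr mul_mx_scalar => /eqP; rewrite addr_eq0 => /eqP ->.
  by rewrite scaleNr.
have := mxrank_unit Bunit; rewrite -hB => hk; rewrite -[X in (X <= _)%N]hk.
exact: leq_trans (mxrankM_maxl _ _) (mxrankM_maxr _ _).
Qed.

Section Rank.
Variables (R : realType) (d1 d2 : Order.disp_t).
Variables (P1 : finPOrderType d1) (P2 : finPOrderType d2).

Definition mxof (M : P1 -> P2 -> R) : 'M[R]_(#|P1|, #|P2|) :=
  \matrix_(i, j) M (enum_val i) (enum_val j).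

Lemma rank_mxof_ND_le r (M : P1 -> P2 -> R) : ND_le r M -> (\rank (mxof M) <= r)%N.
Proof.
move=> [a [b [_ _ hM]]].
pose A : 'M[R]_(#|P1|, r) := \matrix_(i, k) a k (enum_val i).
pose B : 'M[R]_(r, #|P2|) := \matrix_(k, j) b k (enum_val j).
have -> : mxof M = A *m B.
  by apply/matrixP => i j; rewrite !mxE hM; apply: eq_bigr => k _; rewrite !mxE.
exact: leq_trans (mxrankM_maxr _ _) (rank_leq_row _).
Qed.

Lemma exists_full_rank_near (M0 : P1 -> P2 -> R) e : 0 < e ->
  exists2 M, (forall x y, `|M x y - M0 x y| < e) &
             (minn #|P1| #|P2| <= \rank (mxof M))%N.
Proof.
move=> e0; have [t /andP [t0 te] hrk] := exists_full_rank_perturbation (mxof M0) e0.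
pose D : 'M[R]_(#|P1|, #|P2|) := pid_mx (minn #|P1| #|P2|).
exists (fun x y => M0 x y + t * D (enum_rank x) (enum_rank y)).
  move=> x y; rewrite addrC addKr normrM (gtr0_norm t0).
  apply: le_lt_trans te; apply: ler_piMr; first exact: ltW.
  by rewrite mxE; case: (_ && _); rewrite ?normr1 ?normr0.
suff -> : mxof (fun x y => M0 x y + t * D (enum_rank x) (enum_rank y)) =
          mxof M0 + t *: D by [].
by apply/matrixP => i j; rewrite !mxE !enum_valK.
Qed.

End Rank.

Lemma shrink_pos (F : realFieldType) (K x : F) : 0 <= K -> 0 < x ->
  exists2 y, 0 < y & K * y <= x /\ y <= x.
Proof.
move=> K0 x0; have K1 : 0 < K + 1 by rewrite ltr_wpDl.
exists (x / (K + 1)); first by rewrite divr_gt0.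
by rewrite mulrA !ler_pdivrMr //; split; nra.
Qed.

(** * Typical ranks *)

Section TypicalRank.
Variables (R : realType) (d1 d2 : Order.disp_t).
Variables (P1 : finPOrderType d1) (P2 : finPOrderType d2).
Notation C1 := (@order_cone R d1 P1).
Notation C2 := (@order_cone R d2 P2).

Lemma typical_ND_rank_bounds q1 q2 r :
  num_extremal_rays C1 q1 -> num_extremal_rays C2 q2 -> typical_ND_rank R P1 P2 r ->
  (minn #|P1| #|P2| <= r <= minn q1 q2)%N.
Proof.
move=> hq1 hq2 [M0 [e e0 hM]].
have hM0 : ND_eq r M0 by apply: hM => x y; rewrite subrr normr0.
apply/andP; split.
  have [M hMe hrk] := exists_full_rank_near M0 e0.
  exact: leq_trans hrk (rank_mxof_ND_le (ND_eq_le (hM M hMe))).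
case: r hM0 {hM} => [//|s] [hle hnot]; rewrite leq_min.
apply/andP; split; rewrite leqNgt; apply/negP; rewrite ltnS => hq; apply: hnot.
  exact: ND_le_widen hq (ND_le_num_extremal_rays hq1 hle).
apply: ND_le_widen hq (ND_le_transpose (ND_le_num_extremal_rays hq2 (ND_le_transpose hle))).
Qed.

Definition ind_prefix r (U : 'I_r -> {set P1}) n (j : 'I_n) : P1 -> R :=
  if insub (val j) : option 'I_r is Some i then ind R (U i) else fun _ => 0.

Lemma ind_prefix_widen r n (U : 'I_r -> {set P1}) (rn : (r <= n)%N) i :
  ind_prefix U (widen_ord rn i) = ind R (U i).
Proof. by rewrite /ind_prefix /= valK. Qed.

Lemma ND_le_prefix_decomp r (U : 'I_r -> {set P1}) (u : 'I_#|P2| -> P2 -> R)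
    (cf : 'I_#|P2| -> 'I_#|P1| -> R) (M : P1 -> P2 -> R) :
  (forall i, is_upset (U i)) ->
  (forall (i : 'I_r) (k : 'I_#|P1|), val i = val k -> U i = up (enum_val k)) ->
  (forall j, C2 (u j)) -> (forall j k, 0 <= cf j k) ->
  (forall x y, M x y = \sum_j (ind_prefix U j x + \sum_k cf j k * up_ind R k x) * u j y) ->
  (minn #|P1| #|P2| <= r)%N -> ND_le r M.
Proof.
move=> U_up U_principal u_cone cf0 hM; rewrite geq_min => /orP [p1r|p2r].
  apply: (ND_le_of_hull (G := fun i => ind R (U i)) _ u_cone _ hM) => [i|j].
    exact: order_cone_ind.
  have -> : (fun x => ind_prefix U j x + \sum_k cf j k * up_ind R k x) =
            (fun x => 1 * ind_prefix U j x + \sum_k cf j k * up_ind R k x).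
    by apply: functional_extensionality => x; rewrite mul1r.
  apply: in_hullMD => //.
    rewrite /ind_prefix; case: insub => [i|]; last exact: in_hull0.
    by apply: (in_hull_ray (i := i) (t := 1)) => // x; rewrite mul1r.
  apply: in_hull_sum => // k; apply: (in_hull_ray (i := widen_ord p1r k) (t := 1)) => // x.
  by rewrite mul1r (U_principal _ k).
apply: ND_le_widen p2r _.
apply: (ND_le_of_hull (G := fun j x => ind_prefix U j x + \sum_k cf j k * up_ind R k x)
          _ u_cone _ hM) => j.
  apply: order_coneD.
    by rewrite /ind_prefix; case: insub => [i|]; [exact: order_cone_ind | exact: order_cone0].
  apply: (@order_cone_hull R d1 P1 _ (@up_ind R d1 P1)) => [k|].
    exact/order_cone_ind/is_upset_up.
  by exists (cf j).
by apply: (in_hull_ray (i := j) (t := 1)) => // x; rewrite mul1r.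
Qed.

(* Coordinates of [M] in the basis [u] and then in the basis [up_ind] depend
   linearly and boundedly on [M], so a small perturbation of the matrix with
   coordinates [ind_prefix U j + de * \sum_k up_ind k] only moves the
   [up_ind]-coefficients within [[0, 2 de]]. *)
Lemma near_prefix_decomp r (U : 'I_r -> {set P1}) (u : 'I_#|P2| -> P2 -> R) de :
  (forall c : 'I_#|P2| -> R, (forall y, \sum_j c j * u j y = 0) -> forall j, c j = 0) ->
  0 < de -> exists2 e, 0 < e & forall M : P1 -> P2 -> R,
    (forall x y, `|M x y - \sum_j (ind_prefix U j x + de * \sum_k up_ind R k x) * u j y| < e) ->
    exists2 cf : 'I_#|P2| -> 'I_#|P1| -> R, forall j k, 0 <= cf j k <= 2 * de &
      forall x y, M x y = \sum_j (ind_prefix U j x + \sum_k cf j k * up_ind R k x) * u j y.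
Proof.
move=> u_free de0.
have [coef [K [K0 coefE coef_le]]] := free_coords_bounded u_free.
have [coefP [KP [KP0 coefPE coefP_le]]] := free_coords_bounded (@up_ind_free R _ P1).
have [eta eta0 [KP_eta eta_de]] := shrink_pos KP0 de0.
have [e e0 [K_e _]] := shrink_pos K0 eta0.
exists e => // M hM.
pose X (j : 'I_#|P2|) (x : P1) := ind_prefix U j x + de * \sum_k up_ind R k x.
pose Y (j : 'I_#|P2|) (x : P1) := coef (M x) j.
have YX j x : `|Y j x - X j x| <= eta.
  have -> : Y j x - X j x = coef (fun y => M x y - \sum_j X j x * u j y) j.
    apply: (@free_coords_uniq _ _ _ u_free (fun j => Y j x - X j x)) => y.
    under eq_bigr do rewrite mulrBl.
    by rewrite sumrB -coefE -coefE.
  by apply: le_trans K_e; apply: coef_le => y; exact: ltW (hM x y).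
pose mu j k := coefP (fun x => Y j x - X j x) k.
exists (fun j k => de + mu j k) => [j k|x y].
  have := le_trans (coefP_le _ _ (YX j) k) KP_eta.
  by rewrite ler_norml => /andP [h1 h2]; apply/andP; split; rewrite /mu; lra.
rewrite [LHS]coefE; apply: eq_bigr => j _; congr (_ * _).
rewrite -[coef (M x) j](subrK (X j x)) (coefPE (fun x => Y j x - X j x)) /X addrCA.
by rewrite mulr_sumr -big_split; congr (_ + _); apply: eq_bigr => k _; rewrite mulrDl addrC.
Qed.

Lemma typical_ND_rank_of_bounds q1 q2 r :
  num_extremal_rays C1 q1 -> num_extremal_rays C2 q2 -> simplicial C2 ->
  (minn #|P1| #|P2| <= r)%N -> (r <= q1)%N -> (r <= q2)%N -> typical_ND_rank R P1 P2 r.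
Proof.
move=> hq1 hq2 hs hkr rq1 rq2.
have rp2 := leq_trans rq2 (simplicial_num_extremal_rays_le hs hq2).
have [U [U_up U_ext U_inj U_principal]] := extremal_upsets_with_principal hq1 rq1.
have [u [u_free u_hull]] := hs.
have u_cone j : C2 (u j).
  by apply/u_hull; apply: (in_hull_ray (i := j) (t := 1)) => // y; rewrite mul1r.
pose p : R := #|P1|%:R; pose A := 12 * p ^+ 3 + 1.
have pA0 : 0 <= p * A by rewrite mulr_ge0 // addr_ge0 // mulr_ge0 // exprn_ge0.
(* [de] is chosen so that [A * (2 de p) < 1], the closeness to the rays
   required by [card_le_of_hull_near_extremal_rays]. *)
pose de : R := (4 * (p * A) + 1)^-1.
have de0 : 0 < de by rewrite invr_gt0; lra.
have [e e0 near] := near_prefix_decomp U u_free de0.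
exists (fun x y => \sum_j (ind_prefix U j x + de * \sum_k up_ind R k x) * u j y), e => // M.
move=> /near [cf cf_bd hM]; apply: ND_eq_of_le => [|s sr].
  by apply: ND_le_prefix_decomp U_up U_principal u_cone _ hM hkr => j k; case/andP: (cf_bd j k).
move=> /(ND_le_coords_in_hull u_free u_hull hM) [a [Ca ha]].
pose g (j : 'I_r) x := \sum_k cf (widen_ord rp2 j) k * up_ind R k x.
have g_bd j x : `|g j x| <= 2 * de * p.
  have cf_bd' k := cf_bd (widen_ord rp2 j) k; rewrite ger0_norm; last first.
    by apply: sumr_ge0 => k _; rewrite mulr_ge0 ?ind_ge0 //; case/andP: (cf_bd' k).
  apply: le_trans (_ : \sum_(k < #|P1|) 2 * de <= _); last by rewrite sumr_const card_ord mulr_natr.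
  apply: ler_sum => k _; have /andP [c0 c2] := cf_bd' k.
  by rewrite -[leRHS]mulr1 ler_pM ?ind_ge0 ?ind_le1.
have hb : A * (2 * de * p) < 1.
  have -> : A * (2 * de * p) = (2 * (p * A)) / (4 * (p * A) + 1) by rewrite /de; ring.
  by rewrite ltr_pdivrMr; lra.
suff : (r <= s)%N by rewrite leqNgt sr.
apply: (card_le_of_hull_near_extremal_rays U_up U_ext U_inj Ca _ _ g_bd hb) => [j|].
  by have := ha (widen_ord rp2 j); rewrite ind_prefix_widen.
by rewrite !mulr_ge0 // ltW.
Qed.

End TypicalRank.

Unset Implicit Arguments. Set Strict Implicit.

Theorem corollary1 (R : realType) (d1 d2 : Order.disp_t)
    (P1 : finPOrderType d1) (P2 : finPOrderType d2) (q1 q2 r : nat) :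
  num_extremal_rays (@order_cone R d1 P1) q1 ->
  num_extremal_rays (@order_cone R d2 P2) q2 ->
  simplicial (@order_cone R d2 P2) ->
  (typical_ND_rank R P1 P2 r <->
   (minn #|P1| #|P2| <= r <= minn q1 q2)%N).
Proof.
move=> hq1 hq2 hs; split; first exact: typical_ND_rank_bounds.
case/andP=> hkr; rewrite leq_min => /andP [rq1 rq2].
exact: typical_ND_rank_of_bounds hq1 hq2 hs hkr rq1 rq2.
Qed.
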